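(* Let $\alpha:I\to\mathbb{E}^3$ be a smooth space curve parametrized by arclength $s$ with curvature $\kappa\equiv1$. Then $\alpha$ is a Salkowski curve if and only if $\det(\alpha^{(3)}(s),\alpha^{(4)}(s),\alpha^{(5)}(s))=0$ for all $s\in I$.
   Context: $\alpha^{(k)}$ denotes the $k$-th derivative with respect to arclength, and $\det(u,v,w)$ is the determinant of the matrix with columns $u,v,w$. $\{T,N,B\}$ is the Frenet frame of $\alpha$. A Salkowski curve is a curve of constant curvature whose principal normal vector $N$ makes a constant angle with a fixed direction, i.e. $\langle N(s),d\rangle$ is constant for some fixed unit vector $d$ (equivalently, for $\kappa\equiv1$, $\alpha$ is a slant helix). *)

From Stdlib Require Import Reals Lra.
Open Scope R_scope.

Record R3 := mkR3 { vx : R; vy : R; vz : R }.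

Definition dot (u v : R3) : R := vx u * vx v + vy u * vy v + vz u * vz v.
Definition vnorm (u : R3) : R := sqrt (dot u u).
Definition vscale (c : R) (u : R3) : R3 := mkR3 (c * vx u) (c * vy u) (c * vz u).

Definition det3 (u v w : R3) : R :=
    vx u * (vy v * vz w - vz v * vy w)
  - vx v * (vy u * vz w - vz u * vy w)
  + vx w * (vy u * vz v - vz u * vy v).

Definition is_open_interval (I : R -> Prop) : Prop :=
  (exists x, I x) /\
  (forall x, I x -> exists eps, 0 < eps /\ forall y, Rabs (y - x) < eps -> I y) /\
  (forall x y z, I x -> I z -> x <= y <= z -> I y).

(* D is the family of all derivatives of the curve alpha on I:
   D 0 = alpha and D (k+1) is the derivative of D k on I (componentwise).
   Existence of such a D is exactly smoothness (C^infinity) of alpha on I,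
   and then D k = alpha^(k) on I. *)
Definition derivs_on (I : R -> Prop) (alpha : R -> R3) (D : nat -> R -> R3) : Prop :=
  (forall s, I s -> D 0%nat s = alpha s) /\
  (forall (k : nat) s, I s ->
      derivable_pt_lim (fun t => vx (D k t)) s (vx (D (S k) s)) /\
      derivable_pt_lim (fun t => vy (D k t)) s (vy (D (S k) s)) /\
      derivable_pt_lim (fun t => vz (D k t)) s (vz (D (S k) s))).

Definition unit_speed (I : R -> Prop) (D : nat -> R -> R3) : Prop :=
  forall s, I s -> vnorm (D 1%nat s) = 1.

Definition tangent (D : nat -> R -> R3) (s : R) : R3 := D 1%nat s.
Definition curvature (D : nat -> R -> R3) (s : R) : R := vnorm (D 2%nat s).
Definition principal_normal (D : nat -> R -> R3) (s : R) : R3 :=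
  vscale (/ curvature D s) (D 2%nat s).

Definition salkowski (I : R -> Prop) (D : nat -> R -> R3) : Prop :=
  (exists c, forall s, I s -> curvature D s = c) /\
  (exists d : R3, vnorm d = 1 /\
     exists c, forall s, I s -> dot (principal_normal D s) d = c).

(* Since kappa = |alpha^(2)| = 1, the principal normal is N = alpha^(2).
   (=>) If <N, d> is constant for a unit vector d, differentiating gives
   <alpha^(k), d> = 0 for k = 3, 4, 5; three vectors orthogonal to a nonzero
   vector have zero determinant.
   (<=) Put P = alpha^(3) x alpha^(4); then P' = alpha^(3) x alpha^(5).  The
   identity  |P|^2 P' = <P, P'> P + det(alpha^(3), alpha^(4), alpha^(5)) (alpha^(3) x P)
   shows that P' is parallel to P when the determinant vanishes, so the unit
   vector P / |P| is a constant d.  Here P <> 0: differentiating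
   |alpha^(1)|^2 = |alpha^(2)|^2 = 1 gives <alpha^(3), alpha^(1)> = -1,
   <alpha^(3), alpha^(2)> = 0 and <alpha^(4), alpha^(2)> = -|alpha^(3)|^2, whence
   <P, alpha^(1) x alpha^(2)> = |alpha^(3)|^2 > 0.  Finally
   <N, d>' = <alpha^(3), d> = 0, since P is orthogonal to alpha^(3). *)

From Stdlib Require Import Reals Lra Psatz.
Open Scope R_scope.

Definition vzero : R3 := mkR3 0 0 0.

Definition vadd (u v : R3) : R3 := mkR3 (vx u + vx v) (vy u + vy v) (vz u + vz v).

Definition cross (u v : R3) : R3 :=
  mkR3 (vy u * vz v - vz u * vy v)
       (vz u * vx v - vx u * vz v)
       (vx u * vy v - vy u * vx v).

Definition vunit (u : R3) : R3 := vscale (/ vnorm u) u.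

Lemma R3_ext (u v : R3) : vx u = vx v -> vy u = vy v -> vz u = vz v -> u = v.
Proof. destruct u, v; simpl; intros -> -> ->; reflexivity. Qed.

Lemma dot_comm (u v : R3) : dot u v = dot v u.
Proof. unfold dot; ring. Qed.

Lemma dot_vzero_r (u : R3) : dot u vzero = 0.
Proof. unfold dot; simpl; ring. Qed.

Lemma dot_self_nonneg (u : R3) : 0 <= dot u u.
Proof. unfold dot; nra. Qed.

Lemma dot_self_pos (u v : R3) : dot u v <> 0 -> 0 < dot u u.
Proof.
  intros Huv.
  destruct (Rle_lt_or_eq_dec 0 (dot u u) (dot_self_nonneg u)) as [Hpos | Hzero]; auto.
  exfalso; apply Huv. unfold dot in Hzero |- *.
  assert (vx u = 0) by nra. assert (vy u = 0) by nra. assert (vz u = 0) by nra.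
  nra.
Qed.

Lemma dot_of_vnorm_1 (u : R3) : vnorm u = 1 -> dot u u = 1.
Proof.
  unfold vnorm; intros H.
  rewrite <- (sqrt_sqrt (dot u u)) by apply dot_self_nonneg.
  rewrite H; ring.
Qed.

Lemma vnorm_vunit (u : R3) : 0 < dot u u -> vnorm (vunit u) = 1.
Proof.
  intros Hpos. unfold vunit, vnorm at 1.
  assert (Hn : 0 < vnorm u) by (apply sqrt_lt_R0; exact Hpos).
  assert (Hsq : vnorm u * vnorm u = dot u u) by (apply sqrt_sqrt; lra).
  replace (dot (vscale (/ vnorm u) u) (vscale (/ vnorm u) u)) with 1.
  - apply sqrt_1.
  - unfold dot, vscale in *; simpl. field_simplify_eq; lra.
Qed.

Lemma dot_vscale_r (u v : R3) (c : R) : dot u (vscale c v) = c * dot u v.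
Proof. unfold dot, vscale; simpl; ring. Qed.

Lemma cross_orth_l (a b : R3) : dot a (cross a b) = 0.
Proof. unfold dot, cross; simpl; ring. Qed.

Lemma dot_cross_cross (a b c d : R3) :
  dot (cross a b) (cross c d) = dot a c * dot b d - dot a d * dot b c.
Proof. unfold dot, cross; simpl; ring. Qed.

(* Three vectors orthogonal to a nonzero vector d have zero determinant;
   this follows from Cramer's identity
   det(u,v,w) |d|^2 = <d,u> det(d,v,w) + <d,v> det(u,d,w) + <d,w> det(u,v,d). *)
Lemma det3_orthogonal (d u v w : R3) :
  dot d d <> 0 -> dot d u = 0 -> dot d v = 0 -> dot d w = 0 -> det3 u v w = 0.
Proof.
  intros Hd Hu Hv Hw.
  assert (Hcramer : det3 u v w * dot d d =
            dot d u * det3 d v w + dot d v * det3 u d w + dot d w * det3 u v d)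
    by (unfold det3, dot; ring).
  rewrite Hu, Hv, Hw in Hcramer.
  apply (Rmult_eq_reg_r (dot d d)); lra.
Qed.

Lemma cross_parallel_identity (a b c : R3) :
  vscale (dot (cross a b) (cross a b)) (cross a c) =
  vadd (vscale (dot (cross a b) (cross a c)) (cross a b))
       (vscale (det3 a b c) (cross a (cross a b))).
Proof. apply R3_ext; unfold vscale, vadd, dot, cross, det3; simpl; ring. Qed.

Lemma derivable_pt_lim_value (f : R -> R) (s l l' : R) :
  derivable_pt_lim f s l -> l = l' -> derivable_pt_lim f s l'.
Proof. now intros H <-. Qed.

Definition vderiv (F : R -> R3) (s : R) (v : R3) : Prop :=
  derivable_pt_lim (fun t => vx (F t)) s (vx v) /\
  derivable_pt_lim (fun t => vy (F t)) s (vy v) /\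
  derivable_pt_lim (fun t => vz (F t)) s (vz v).

Lemma vderiv_const (d : R3) (s : R) : vderiv (fun _ => d) s vzero.
Proof. split; [| split]; apply derivable_pt_lim_const. Qed.

Lemma vderiv_dot (F G : R -> R3) (s : R) (a b : R3) :
  vderiv F s a -> vderiv G s b ->
  derivable_pt_lim (fun t => dot (F t) (G t)) s (dot a (G s) + dot (F s) b).
Proof.
  intros [Hx [Hy Hz]] [Kx [Ky Kz]].
  replace (dot a (G s) + dot (F s) b) with
    ((vx a * vx (G s) + vx (F s) * vx b) + (vy a * vy (G s) + vy (F s) * vy b)
     + (vz a * vz (G s) + vz (F s) * vz b)) by (unfold dot; ring).
  unfold dot.
  repeat apply derivable_pt_lim_plus; apply derivable_pt_lim_mult; assumption.
Qed.

Lemma vderiv_cross (F G : R -> R3) (s : R) (a b : R3) :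
  vderiv F s a -> vderiv G s b ->
  vderiv (fun t => cross (F t) (G t)) s (vadd (cross a (G s)) (cross (F s) b)).
Proof.
  intros [Hx [Hy Hz]] [Kx [Ky Kz]].
  unfold vderiv, cross, vadd; simpl.
  split; [| split];
    (eapply derivable_pt_lim_value;
     [apply derivable_pt_lim_minus; apply derivable_pt_lim_mult; eassumption
     | cbv beta; ring]).
Qed.

Lemma vderiv_dot_fixed (F : R -> R3) (d : R3) (s : R) (a : R3) :
  vderiv F s a -> derivable_pt_lim (fun t => dot (F t) d) s (dot a d).
Proof.
  intros HF.
  eapply derivable_pt_lim_value;
    [apply (vderiv_dot F (fun _ => d) s a vzero HF (vderiv_const d s)) |].
  rewrite dot_vzero_r; ring.
Qed.

Lemma deriv_inv_sqrt_mul_zero (p G : R -> R) (s q G' : R) :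
  derivable_pt_lim p s q -> derivable_pt_lim G s G' -> 0 < G s ->
  2 * (G s * q) = G' * p s ->
  derivable_pt_lim (fun t => / sqrt (G t) * p t) s 0.
Proof.
  intros Hp HG Hpos Hpar.
  assert (Hr : 0 < sqrt (G s)) by (apply sqrt_lt_R0; exact Hpos).
  assert (Hsqrt : derivable_pt_lim (comp sqrt G) s (/ (2 * sqrt (G s)) * G')).
  { apply derivable_pt_lim_comp; [exact HG | apply derivable_pt_lim_sqrt, Hpos]. }
  assert (Hquot := derivable_pt_lim_div p (comp sqrt G) s _ _ Hp Hsqrt
                     ltac:(unfold comp; lra)).
  apply (derivable_pt_lim_locally_ext (p / comp sqrt G)%F _ s (s - 1) (s + 1));
    [lra | intros z _; unfold div_fct, comp, Rdiv; apply Rmult_comm |].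
  eapply derivable_pt_lim_value; [exact Hquot |].
  unfold comp. rewrite <- (sqrt_sqrt (G s)) in Hpar by lra.
  set (r := sqrt (G s)) in *.
  replace (q * r - / (2 * r) * G' * p s) with ((2 * (r * r * q) - G' * p s) / (2 * r))
    by (field; lra).
  rewrite Hpar. unfold Rdiv; ring.
Qed.

Lemma vderiv_vunit_zero (P : R -> R3) (s : R) (Q : R3) :
  vderiv P s Q -> 0 < dot (P s) (P s) ->
  vscale (dot (P s) (P s)) Q = vscale (dot (P s) Q) (P s) ->
  vderiv (fun t => vunit (P t)) s vzero.
Proof.
  intros HP Hpos Hpar.
  assert (HG := vderiv_dot P P s Q Q HP HP).
  rewrite (dot_comm Q) in HG.
  assert (Ex := f_equal vx Hpar). assert (Ey := f_equal vy Hpar).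
  assert (Ez := f_equal vz Hpar). simpl in Ex, Ey, Ez.
  destruct HP as [Hx [Hy Hz]].
  unfold vunit, vscale, vnorm, vderiv; simpl.
  split; [| split];
    (eapply deriv_inv_sqrt_mul_zero; [eassumption | exact HG | exact Hpos | lra]).
Qed.

Section IntervalCalculus.

Variable J : R -> Prop.
Hypothesis HJ : is_open_interval J.

Lemma deriv_of_const_on (f : R -> R) (c s l : R) :
  (forall t, J t -> f t = c) -> J s -> derivable_pt_lim f s l -> l = 0.
Proof.
  intros Hc Hs Hd.
  destruct HJ as [_ [Hopen _]].
  destruct (Hopen s Hs) as [e [He Hball]].
  apply (uniqueness_limite (fun _ => c) s); [| apply derivable_pt_lim_const].
  apply (derivable_pt_lim_locally_ext f _ s (s - e) (s + e) l); [lra | | exact Hd].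
  intros z Hz. apply Hc, Hball, Rabs_def1; lra.
Qed.

Lemma const_of_deriv_zero (f : R -> R) (x y : R) :
  (forall t, J t -> derivable_pt_lim f t 0) -> J x -> J y -> f x = f y.
Proof.
  intros Hd.
  destruct HJ as [_ [_ Hconvex]].
  assert (Hlt : forall a b, J a -> J b -> a < b -> f a = f b).
  { intros a b Ha Hb Hab.
    destruct (MVT_cor2 f (fun _ => 0) a b Hab) as [c [Hc _]].
    - intros c Hc. apply Hd, (Hconvex a c b); auto.
    - lra. }
  intros Hx Hy.
  destruct (Rtotal_order x y) as [H | [H | H]].
  - auto.
  - now subst.
  - symmetry; auto.
Qed.

Lemma vconst_of_vderiv_zero (F : R -> R3) (x y : R) :
  (forall t, J t -> vderiv F t vzero) -> J x -> J y -> F x = F y.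
Proof.
  intros Hd Hx Hy.
  apply R3_ext;
    [apply (const_of_deriv_zero (fun t => vx (F t)))
    | apply (const_of_deriv_zero (fun t => vy (F t)))
    | apply (const_of_deriv_zero (fun t => vz (F t)))];
    auto; intros t Ht; apply (Hd t Ht).
Qed.

End IntervalCalculus.

(* The vector alpha^(3) x alpha^(4); when the determinant vanishes its
   direction is the fixed direction of the Salkowski curve. *)
Definition axis (D : nat -> R -> R3) (t : R) : R3 := cross (D 3%nat t) (D 4%nat t).

Section UnitCurvatureCurve.

Variables (J : R -> Prop) (alpha : R -> R3) (D : nat -> R -> R3).
Hypothesis HJ : is_open_interval J.
Hypothesis HD : derivs_on J alpha D.

Lemma D_vderiv (k : nat) (s : R) : J s -> vderiv (D k) s (D (S k) s).
Proof. intros Hs. exact (proj2 HD k s Hs). Qed.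

Lemma dot_D_const_deriv (i j : nat) (c : R) :
  (forall t, J t -> dot (D i t) (D j t) = c) ->
  forall s, J s -> dot (D (S i) s) (D j s) + dot (D i s) (D (S j) s) = 0.
Proof.
  intros Hc s Hs.
  apply (deriv_of_const_on J HJ (fun t => dot (D i t) (D j t)) c s); auto.
  apply vderiv_dot; apply D_vderiv, Hs.
Qed.

Lemma dot_fixed_const_deriv (k : nat) (d : R3) (c : R) :
  (forall t, J t -> dot (D k t) d = c) -> forall s, J s -> dot (D (S k) s) d = 0.
Proof.
  intros Hc s Hs.
  apply (deriv_of_const_on J HJ (fun t => dot (D k t) d) c s); auto.
  apply vderiv_dot_fixed, D_vderiv, Hs.
Qed.

Hypothesis HK : forall s, J s -> curvature D s = 1.

Lemma principal_normal_eq (s : R) : J s -> principal_normal D s = D 2%nat s.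
Proof.
  intros Hs. unfold principal_normal, vscale.
  rewrite HK, Rinv_1 by exact Hs.
  apply R3_ext; simpl; ring.
Qed.

Lemma salkowski_det_zero :
  salkowski J D -> forall s, J s -> det3 (D 3%nat s) (D 4%nat s) (D 5%nat s) = 0.
Proof.
  intros [_ [d [Hd [c Hc]]]] s Hs.
  assert (H2 : forall t, J t -> dot (D 2%nat t) d = c)
    by (intros t Ht; rewrite <- principal_normal_eq; auto).
  assert (H3 := dot_fixed_const_deriv 2 d c H2).
  assert (H4 := dot_fixed_const_deriv 3 d 0 H3).
  assert (H5 := dot_fixed_const_deriv 4 d 0 H4).
  apply (det3_orthogonal d); rewrite ?(dot_comm d); auto.
  rewrite (dot_of_vnorm_1 d Hd); lra.
Qed.

Hypothesis HU : unit_speed J D.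

(* Relations between alpha^(1), ..., alpha^(4), obtained by differentiating
   |alpha^(1)|^2 = |alpha^(2)|^2 = 1 twice. *)
Lemma derivative_relations (s : R) : J s ->
  dot (D 3%nat s) (D 1%nat s) = -1 /\ dot (D 3%nat s) (D 2%nat s) = 0 /\
  dot (D 4%nat s) (D 2%nat s) = - dot (D 3%nat s) (D 3%nat s).
Proof.
  assert (H11 : forall t, J t -> dot (D 1%nat t) (D 1%nat t) = 1)
    by (intros t Ht; apply dot_of_vnorm_1, HU, Ht).
  assert (H22 : forall t, J t -> dot (D 2%nat t) (D 2%nat t) = 1)
    by (intros t Ht; apply dot_of_vnorm_1, HK, Ht).
  assert (H12 : forall t, J t -> dot (D 1%nat t) (D 2%nat t) = 0).
  { intros t Ht. pose proof (dot_D_const_deriv 1 1 1 H11 t Ht) as H.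
    rewrite (dot_comm (D 2%nat t)) in H. lra. }
  assert (H23 : forall t, J t -> dot (D 2%nat t) (D 3%nat t) = 0).
  { intros t Ht. pose proof (dot_D_const_deriv 2 2 1 H22 t Ht) as H.
    rewrite (dot_comm (D 3%nat t)) in H. lra. }
  intros Hs.
  pose proof (dot_D_const_deriv 1 2 0 H12 s Hs) as H13.
  pose proof (dot_D_const_deriv 2 3 0 H23 s Hs) as H24.
  rewrite H22 in H13 by exact Hs.
  rewrite (dot_comm (D 3%nat s) (D 1%nat s)), (dot_comm (D 3%nat s) (D 2%nat s)),
    (dot_comm (D 4%nat s)), H23 by exact Hs.
  repeat split; lra.
Qed.

(* The axis never vanishes: <axis, alpha^(1) x alpha^(2)> = |alpha^(3)|^2 > 0. *)
Lemma axis_nonzero (s : R) : J s -> 0 < dot (axis D s) (axis D s).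
Proof.
  intros Hs.
  destruct (derivative_relations s Hs) as [H31 [H32 H42]].
  assert (H33 : 0 < dot (D 3%nat s) (D 3%nat s))
    by (apply (dot_self_pos _ (D 1%nat s)); lra).
  apply (dot_self_pos _ (cross (D 1%nat s) (D 2%nat s))).
  unfold axis. rewrite dot_cross_cross, H31, H32, H42. lra.
Qed.

Lemma axis_vderiv (s : R) : J s -> vderiv (axis D) s (cross (D 3%nat s) (D 5%nat s)).
Proof.
  intros Hs.
  replace (cross (D 3%nat s) (D 5%nat s))
    with (vadd (cross (D 4%nat s) (D 4%nat s)) (cross (D 3%nat s) (D 5%nat s)))
    by (apply R3_ext; unfold vadd, cross; simpl; ring).
  apply vderiv_cross; apply D_vderiv, Hs.
Qed.

Lemma det_zero_salkowski :
  (forall s, J s -> det3 (D 3%nat s) (D 4%nat s) (D 5%nat s) = 0) -> salkowski J D.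
Proof.
  intros Hdet.
  assert (Hunit : forall t, J t -> vderiv (fun u => vunit (axis D u)) t vzero).
  { intros t Ht.
    apply (vderiv_vunit_zero _ _ _ (axis_vderiv t Ht) (axis_nonzero t Ht)).
    unfold axis. rewrite cross_parallel_identity, Hdet by exact Ht.
    apply R3_ext; simpl; ring. }
  destruct HJ as [[s0 Hs0] _].
  set (d := vunit (axis D s0)).
  assert (Hconst : forall t, J t -> vunit (axis D t) = d)
    by (intros t Ht; exact (vconst_of_vderiv_zero J HJ _ t s0 Hunit Ht Hs0)).
  split; [exists 1; exact HK |].
  exists d. split; [apply vnorm_vunit, axis_nonzero, Hs0 |].
  exists (dot (D 2%nat s0) d). intros s Hs.
  rewrite principal_normal_eq by exact Hs.
  apply (const_of_deriv_zero J HJ (fun t => dot (D 2%nat t) d)); auto.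
  intros t Ht.
  eapply derivable_pt_lim_value; [apply vderiv_dot_fixed, D_vderiv, Ht |].
  rewrite <- (Hconst t Ht). unfold vunit.
  rewrite dot_vscale_r. unfold axis. rewrite cross_orth_l. ring.
Qed.

End UnitCurvatureCurve.

Theorem theorem4 (J : R -> Prop) (alpha : R -> R3) (D : nat -> R -> R3) :
  is_open_interval J ->
  derivs_on J alpha D ->
  unit_speed J D ->
  (forall s, J s -> curvature D s = 1) ->
  (salkowski J D <->
   forall s, J s -> det3 (D 3%nat s) (D 4%nat s) (D 5%nat s) = 0).
Proof.
  intros HJ HD HU HK. split.
  - exact (salkowski_det_zero J alpha D HJ HD HK).
  - exact (det_zero_salkowski J alpha D HJ HD HK HU).
Qed.
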